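(* Let $\mathcal I$ be a nonempty index set, and for each $i\in\mathcal I$ let $\mu^i$ be a stationary policy and $S^i\subset X$ a set with $f(x,\mu^i(x))\in S^i$ for all $x\in S^i$. Define $\bar J_S:X\to[0,\infty]$ by $\bar J_S(x)=\inf_{i\in\mathcal I_x}J_{\mu^i}(x)$, where $\mathcal I_x=\{i\in\mathcal I: x\in S^i\}$ and $\inf\emptyset=\infty$ (so $\bar J_S<\infty$ only possibly on $S=\bigcup_{i\in\mathcal I}S^i$). Fix $\ell\ge1$ and let $\tilde J_S$ be the optimal value and $\tilde\mu$ the rollout policy of the $\ell$-step rollout problem with terminal cost $\bar J_S$. Then $$J_{\tilde\mu}(x)\le\tilde J_S(x)\le\bar J_S(x)\quad\text{for all }x\in X.$$
   Context: Deterministic infinite-horizon problem: arbitrary state space $X$ and control space $U$, dynamics $x_{k+1}=f(x_k,u_k)$ with $f:X\times U\to X$, nonempty control constraint sets $U(x)\subset U$, stage cost $g(x,u)\in[0,\infty]$ for $x\in X$, $u\in U(x)$. A stationary policy is a map $\mu:X\to U$ with $\mu(x)\in U(x)$; its cost is $J_\mu(x_0)=\sum_{k=0}^\infty g(x_k,\mu(x_k))$ with $x_{k+1}=f(x_k,\mu(x_k))$. Standing assumption: for every $J:X\to[0,\infty]$ and every $x\in X$, $\inf_{u\in U(x)}\{g(x,u)+J(f(x,u))\}$ is attained. Rollout with terminal cost $\bar J$ and lookahead $\ell$: $J_0=\bar J$, $J_{k+1}(x)=\min_{u\in U(x)}\{g(x,u)+J_k(f(x,u))\}$; the optimal value is $J_\ell(x)$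 (equal to the minimum of $\sum_{k=0}^{\ell-1}g(x_k,u_k)+\bar J(x_\ell)$ over $u_k\in U(x_k)$ with $x_0=x$, $x_{k+1}=f(x_k,u_k)$), and the rollout policy is $\tilde\mu(x)\in\arg\min_{u\in U(x)}\{g(x,u)+J_{\ell-1}(f(x,u))\}$ (the first control of a minimizing sequence). *)

From HB Require Import structures.
From mathcomp Require Import all_boot all_order all_algebra.
From mathcomp Require Import all_classical all_reals all_analysis.
Set Implicit Arguments. Unset Strict Implicit. Unset Printing Implicit Defensive.
Import Order.TTheory GRing.Theory Num.Theory.
Local Open Scope classical_set_scope.
Local Open Scope ring_scope.
Local Open Scope ereal_scope.

Definition traj (X U : Type) (f : X -> U -> X) (mu : X -> U) (x0 : X) (k : nat) : X :=
  iter k (fun x => f x (mu x)) x0.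

Definition Jpol (R : realType) (X U : Type) (f : X -> U -> X) (g : X -> U -> \bar R)
    (mu : X -> U) (x0 : X) : \bar R :=
  \sum_(k <oo) g (traj f mu x0 k) (mu (traj f mu x0 k)).

Definition bellman (R : realType) (X U : Type) (f : X -> U -> X) (Uc : X -> set U)
    (g : X -> U -> \bar R) (J : X -> \bar R) (x : X) : \bar R :=
  ereal_inf [set g x u + J (f x u) | u in Uc x].

Definition rolloutJ (R : realType) (X U : Type) (f : X -> U -> X) (Uc : X -> set U)
    (g : X -> U -> \bar R) (Jbar : X -> \bar R) (k : nat) : X -> \bar R :=
  iter k (bellman f Uc g) Jbar.

(* Jbar_S(x) = inf_{i in I_x} J_{mu^i}(x), I_x = {i | x in S^i}; inf of empty set = +oo *)
Definition JbarS (R : realType) (X U I : Type) (f : X -> U -> X) (g : X -> U -> \bar R)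
    (mus : I -> X -> U) (S : I -> set X) (x : X) : \bar R :=
  ereal_inf [set Jpol f g (mus i) x | i in [set i | S i x]].

From HB Require Import structures.
From mathcomp Require Import all_boot all_order all_algebra.
From mathcomp Require Import all_classical all_reals all_analysis.
Import Order.TTheory GRing.Theory Num.Theory.
Local Open Scope classical_set_scope.
Local Open Scope ring_scope.
Local Open Scope ereal_scope.

(* Write T for the Bellman operator and Jbar for the terminal cost JbarS.
   1. Jbar is nonnegative and satisfies T Jbar <= Jbar ("sequential
      improvement"): for i with x in S^i, J_{mu^i}(x) = g(x,mu^i(x)) +
      J_{mu^i}(f(x,mu^i(x))), and the successor state still lies in S^i,
      so the second summand dominates Jbar(f(x,mu^i(x))).
   2. By monotonicity of T, any J >= 0 with T J <= J has nonincreasing,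
      nonnegative iterates T^k J, all bounded by J.  With k = l this gives
      the right inequality J_l <= Jbar.
   3. Since J_l <= J_{l-1}, the rollout policy satisfies the Lyapunov-type
      inequality g(x,mu~(x)) + J_l(f(x,mu~(x))) <= J_l(x).  Summing along the
      closed-loop trajectory bounds every partial sum of J_{mu~}(x) by
      J_l(x), hence J_{mu~}(x) <= J_l(x) in the limit. *)

Section Bellman.

Variables (R : realType) (X U : Type) (f : X -> U -> X) (Uc : X -> set U).
Variable g : X -> U -> \bar R.

Lemma Jpol_step (mu : X -> U) : (forall x, 0 <= g x (mu x)) ->
  forall x, Jpol f g mu x = g x (mu x) + Jpol f g mu (f x (mu x)).
Proof.
move=> g_ge0 x; rewrite /Jpol (nneseries_recl (P := xpredT)) //; congr (_ + _).
rewrite -nneseries_addn //; apply: eq_eseriesr => k _.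
by rewrite addn1 /traj iterSr.
Qed.

Lemma Jpol_ge0 (mu : X -> U) : (forall x, 0 <= g x (mu x)) ->
  forall x, 0 <= Jpol f g mu x.
Proof. by move=> g_ge0 x; apply: nneseries_ge0. Qed.

Lemma Jpol_le_lyapunov (mu : X -> U) (W : X -> \bar R) :
  (forall x, 0 <= g x (mu x)) -> (forall x, 0 <= W x) ->
  (forall x, g x (mu x) + W (f x (mu x)) <= W x) ->
  forall x, Jpol f g mu x <= W x.
Proof.
move=> g_ge0 W_ge0 W_dec x.
have partial n : \sum_(0 <= k < n) g (traj f mu x k) (mu (traj f mu x k))
                 + W (traj f mu x n) <= W x.
  elim: n => [|n IH]; first by rewrite big_geq // add0e.
  rewrite big_nat_recr //= -addeA; apply: le_trans IH; apply: leeD2l.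
  exact: W_dec.
apply: lime_le; first exact: is_cvg_nneseries.
by apply: nearW => n; apply: le_trans (partial n); apply: leeDl.
Qed.

Lemma bellman_le (J : X -> \bar R) {x u} : Uc x u ->
  bellman f Uc g J x <= g x u + J (f x u).
Proof. by move=> Uxu; apply: ge_ereal_inf; exists (g x u + J (f x u)) => //; exists u. Qed.

Lemma bellman_mono (J J' : X -> \bar R) : (forall y, J y <= J' y) ->
  forall x, bellman f Uc g J x <= bellman f Uc g J' x.
Proof.
move=> leJ x; apply: le_ereal_inf_tmp => _ [u Uxu <-].
apply: (le_trans (bellman_le J Uxu)); exact: leeD2l.
Qed.

Hypothesis g_ge0 : forall x u, Uc x u -> 0 <= g x u.

Lemma bellman_ge0 (J : X -> \bar R) : (forall y, 0 <= J y) ->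
  forall x, 0 <= bellman f Uc g J x.
Proof.
move=> J_ge0 x; apply: le_ereal_inf_tmp => _ [u Uxu <-].
by apply: adde_ge0; [exact: g_ge0 | exact: J_ge0].
Qed.

Section ValueIteration.

Variable J : X -> \bar R.
Hypothesis J_ge0 : forall y, 0 <= J y.
Hypothesis TJ_le : forall y, bellman f Uc g J y <= J y.

Lemma rolloutJ_ge0 k y : 0 <= rolloutJ f Uc g J k y.
Proof.
elim: k y => [|k IH] y; first exact: J_ge0.
by rewrite /rolloutJ iterS; apply: bellman_ge0.
Qed.

Lemma rolloutJ_decr k y : rolloutJ f Uc g J k.+1 y <= rolloutJ f Uc g J k y.
Proof.
elim: k y => [|k IH] y; first exact: TJ_le.
by rewrite /rolloutJ iterS [in X in _ <= X]iterS; apply: bellman_mono.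
Qed.

Lemma rolloutJ_le k y : rolloutJ f Uc g J k y <= J y.
Proof. by elim: k y => [|k IH] y //; exact: le_trans (rolloutJ_decr k y) (IH y). Qed.

End ValueIteration.

Section TerminalCost.

Variables (I : Type) (mus : I -> X -> U) (S : I -> set X).
Hypothesis mus_adm : forall i x, Uc x (mus i x).
Hypothesis S_inv : forall i x, S i x -> S i (f x (mus i x)).

Lemma JbarS_ge0 y : 0 <= JbarS f g mus S y.
Proof.
apply: le_ereal_inf_tmp => _ [i _ <-].
by apply: Jpol_ge0 => z; apply: g_ge0.
Qed.

Lemma bellman_JbarS_le y : bellman f Uc g (JbarS f g mus S) y <= JbarS f g mus S y.
Proof.
apply: le_ereal_inf_tmp => _ [i Siy <-].
rewrite Jpol_step; last by move=> z; apply: g_ge0.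
apply: (le_trans (bellman_le _ (mus_adm i y))); apply: leeD2l.
apply: ge_ereal_inf; exists (Jpol f g (mus i) (f y (mus i y))) => //.
by exists i => //; apply: S_inv.
Qed.

End TerminalCost.

End Bellman.

Theorem proposition4 (R : realType) (X U : Type)
  (f : X -> U -> X) (Uc : X -> set U) (g : X -> U -> \bar R)
  (Uc_ne : forall x, exists u, Uc x u)
  (g_ge0 : forall x u, Uc x u -> 0 <= g x u)
  (attained : forall J : X -> \bar R, (forall y, 0 <= J y) ->
     forall x, exists2 u, Uc x u & g x u + J (f x u) = bellman f Uc g J x)
  (I : Type) (I_ne : inhabited I)
  (mus : I -> X -> U) (mus_adm : forall i x, Uc x (mus i x))
  (S : I -> set X)
  (S_inv : forall i x, S i x -> S i (f x (mus i x)))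
  (l : nat) (l_ge1 : (1 <= l)%N)
  (mut : X -> U) (mut_adm : forall x, Uc x (mut x))
  (mut_argmin : forall x,
     g x (mut x) + rolloutJ f Uc g (JbarS f g mus S) l.-1 (f x (mut x))
     = rolloutJ f Uc g (JbarS f g mus S) l x) :
  forall x : X,
    Jpol f g mut x <= rolloutJ f Uc g (JbarS f g mus S) l x /\
    rolloutJ f Uc g (JbarS f g mus S) l x <= JbarS f g mus S x.
Proof.
have Jb_ge0 := @JbarS_ge0 R X U f Uc g g_ge0 I mus S mus_adm.
have TJb_le := @bellman_JbarS_le R X U f Uc g g_ge0 I mus S mus_adm S_inv.
have lyapunov y : g y (mut y) + rolloutJ f Uc g (JbarS f g mus S) l (f y (mut y))
                  <= rolloutJ f Uc g (JbarS f g mus S) l y.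
  rewrite -[in X in _ <= X]mut_argmin; apply: leeD2l.
  by rewrite -[in X in X <= _](ltn_predK l_ge1); apply: rolloutJ_decr.
move=> x; split; last exact: (@rolloutJ_le R X U f Uc g _ TJb_le).
apply: (@Jpol_le_lyapunov R X U f g mut _ _ _ lyapunov).
- by move=> y; apply: g_ge0.
- exact: (@rolloutJ_ge0 R X U f Uc g g_ge0 _ Jb_ge0).
Qed.
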